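(* Let $\Omega=\{\Omega_1,\dots,\Omega_N\}$ be a finite set of points with distance function $d$, let $1\le n<N$, and let $r\in\{1,\dots,n\}$. Define, for $t\in\{1,\dots,n\}$, $f(t)=\max\big(d(\Omega_{n+1},\Omega_t),\ MMJ(\Omega_t,\Omega_r~|~\Omega_{[1,n]})\big)$, and $\mathbb{X}=\{f(t): t\in\{1,\dots,n\}\}$. Then $MMJ(\Omega_{n+1},\Omega_r~|~\Omega_{[1,n+1]})=\min(\mathbb{X})$.
   Context: $\Omega$ is a finite set of points indexed $\Omega_1,\dots,\Omega_N$, and $\Omega_{[1,n]}=\{\Omega_1,\dots,\Omega_n\}$. $d:\Omega\times\Omega\to[0,\infty)$ is a distance function (e.g. Euclidean distance), symmetric with $d(x,x)=0$. For a subset $S\subseteq\Omega$, a path from $i$ to $j$ in $S$ is a finite sequence of points of $S$ (at least two) starting at $i$ and ending at $j$, with no repeated points except that start and end may coincide when $i=j$. A jump of a path is the distance $d(x,y)$ between two consecutive points $x,y$, and $max\_jump$ of a path is its largest jump. The Min-Max-Jump distance with context $S$ is $MMJ(i,j~|~S)=\min\{max\_jump(\epsilon): \epsilon \text{ a path from } i \text{ to } j \text{ in } S\}$ for $i,j\in S$, with $MMJ(i,i~|~S)=0$. *)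

From HB Require Import structures.
From mathcomp Require Import all_boot all_order all_algebra.
From mathcomp Require Import reals.
Set Implicit Arguments. Unset Strict Implicit. Unset Printing Implicit Defensive.
Import Order.TTheory GRing.Theory Num.Theory.
Local Open Scope ring_scope.

Section MMJ.
Variables (R : realDomainType) (T : finType) (d : T -> T -> R).

Definition is_path (S : {set T}) (i j : T) (p : seq T) : bool :=
  match p with
  | [::] => false
  | x :: q => [&& x == i, last x q == j, q != [::], all (mem S) p &
                 if i == j then uniq q else uniq p]
  end.

Definition max_jump (p : seq T) : R :=
  \big[Num.max/0]_(e <- zip p (behead p)) d e.1 e.2.

(* Paths have no repeated points so have size <= #|T|+1; we enumerate tuples
   of size k < #|T|.+2.  For i != j in S the path [:: i; j] exists with
   max_jump = d i j, so using d i j as the neutral value of the min is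
   harmless (it is attained). *)
Definition MMJ (S : {set T}) (i j : T) : R :=
  if i == j then 0 else
  \big[Num.min/d i j]_(k < #|T|.+2)
     \big[Num.min/d i j]_(t : k.-tuple T | is_path S i j t) max_jump t.

End MMJ.

(* Omega_[1,k] = {Omega_1, ..., Omega_k}; indices are 0-based in Rocq,
   so Omega_(s+1) is Om s. *)
Definition Omega_upto (T : finType) (N : nat) (Om : 'I_N -> T) (k : nat) : {set T} :=
  [set Om t | t : 'I_N & (t < k)%N].

From HB Require Import structures.
From mathcomp Require Import all_boot all_order all_algebra.
From mathcomp Require Import reals.
Set Implicit Arguments. Unset Strict Implicit. Unset Printing Implicit Defensive.
Import Order.TTheory GRing.Theory Num.Theory.
Local Open Scope ring_scope.

(* An optimal path from a new point x to j in x |: S leaves x at once and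
   never returns, so it is an edge x -> i followed by a path from i to j
   inside S; conversely any such edge and path concatenate to a path in
   x |: S. *)

Section Paths.
Variable T : finType.
Implicit Types (S : {set T}) (i j x y : T) (p q : seq T).

Lemma is_path_size S i j p : is_path S i j p -> (size p < #|T|.+2)%N.
Proof.
case: p => [//|y q] /and5P[_ _ _ _ uniq_p].
have uniq_q : uniq q by case: (i == j) uniq_p => // /andP[].
by rewrite /= !ltnS -(card_uniqP uniq_q) max_card.
Qed.

Lemma is_path_cons2 S i j p : is_path S i j p -> exists y q, p = [:: i, y & q].
Proof.
case: p => [|x [|y q]] //; first by rewrite /= !andbF.
by case/andP=> /eqP-> _; exists y, q.
Qed.

Lemma is_path_in_setU1 S x i j p : x \notin S -> i != j ->
  is_path S i j p -> is_path (x |: S) x j (x :: p).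
Proof.
case: p => [//|y q] xNS ij /and5P[/eqP-> last_j q_ne0 all_S uniq_p] /=.
have xNp : x \notin i :: q by apply: contra xNS => /(allP all_S).
have jS : j \in S by rewrite -(eqP last_j); apply: (allP all_S); exact: mem_last.
have xj : (x == j) = false by apply: contraNF xNS => /eqP->.
rewrite (negbTE ij) /= in uniq_p; case/andP: uniq_p => iNq uniq_q.
rewrite eqxx last_j xj xNp iNq uniq_q setU11 /= andbT.
by apply: sub_all all_S => z; apply: setU1r.
Qed.

Lemma is_path_from_setU1 S x y j q : x \notin S -> j \in S -> y != j ->
  is_path (x |: S) x j [:: x, y & q] -> is_path S y j (y :: q).
Proof.
move=> xNS jS yj /and5P[_ last_j _ all_xS uniq_p].
have xj : (x == j) = false by apply: contraNF xNS => /eqP->.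
rewrite xj in uniq_p; case/andP: uniq_p => xNp uniq_q.
apply/and5P; split=> //; last by rewrite (negbTE yj).
  by case: q last_j {all_xS xNp uniq_q} => //= /eqP yE; rewrite yE eqxx in yj.
apply/allP => z zp.
have /setU1P[zx|//] := allP all_xS z (mem_behead (s := [:: x, y & q]) zp).
by move: xNp; rewrite -zx zp.
Qed.

End Paths.

Section MinMaxJump.
Variables (R : realDomainType) (T : finType) (d : T -> T -> R).
Hypothesis d_ge0 : forall x y, 0 <= d x y.
Implicit Types (S : {set T}) (i j x y : T) (p q : seq T).

Lemma max_jump_cons x y q :
  max_jump d [:: x, y & q] = Num.max (d x y) (max_jump d (y :: q)).
Proof. by rewrite /max_jump /= big_cons. Qed.

Lemma MMJxx S i : MMJ d S i i = 0.
Proof. by rewrite /MMJ eqxx. Qed.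

Lemma MMJ_le_dist S i j : MMJ d S i j <= d i j.
Proof. by rewrite /MMJ; case: eqP => [->|_]; [rewrite d_ge0 | exact: bigmin_le_id]. Qed.

Lemma MMJ_le_max_jump S i j p : is_path S i j p -> MMJ d S i j <= max_jump d p.
Proof.
move=> p_path; rewrite /MMJ; case: eqP => [_|_]; first exact: bigmax_ge_id.
apply: (@bigmin_inf _ _ _ _ (Ordinal (is_path_size p_path))) => //.
exact: (@bigmin_inf _ _ _ _ (in_tuple p)).
Qed.

(* The direct path [:: i; j] shows that the default value d i j of the
   minimum is itself attained. *)
Lemma MMJ_attained S i j : i != j -> i \in S -> j \in S ->
  exists2 p, is_path S i j p & MMJ d S i j = max_jump d p.
Proof.
move=> ij iS jS; rewrite /MMJ (negbTE ij).
pose attained v := v = d i j \/ exists2 p, is_path S i j p & v = max_jump d p.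
have min_attained a b : attained a -> attained b -> attained (Num.min a b).
  by rewrite minEle; case: ifP.
have [->|//] : attained (\big[Num.min/d i j]_(k < #|T|.+2)
    \big[Num.min/d i j]_(t : k.-tuple T | is_path S i j t) max_jump d t).
  apply: big_ind => [|//|k _]; first by left.
  apply: big_ind => [|//|t t_path]; [by left | by right; exists (tval t)].
exists [:: i; j]; first by rewrite /= eqxx iS jS (negbTE ij) /= eqxx inE ij.
by rewrite /max_jump /= big_cons big_nil max_l.
Qed.

Lemma MMJ_setU1_le S x i j : x \notin S -> i \in S -> j \in S ->
  MMJ d (x |: S) x j <= Num.max (d x i) (MMJ d S i j).
Proof.
move=> xNS iS jS; have [<-|ij] := eqVneq i j.
  by rewrite MMJxx max_l ?d_ge0 ?MMJ_le_dist.
have [p p_path ->] := MMJ_attained ij iS jS.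
have [y [q p_eq]] := is_path_cons2 p_path; rewrite {p}p_eq in p_path *.
by rewrite -max_jump_cons MMJ_le_max_jump // (is_path_in_setU1 xNS ij p_path).
Qed.

Lemma MMJ_setU1_ge S x j : x \notin S -> j \in S ->
  exists2 i, i \in S & Num.max (d x i) (MMJ d S i j) <= MMJ d (x |: S) x j.
Proof.
move=> xNS jS; have xj : x != j by apply: contraNneq xNS => ->.
have [p p_path ->] := MMJ_attained xj (setU11 x S) (setU1r x jS).
have [y [q p_eq]] := is_path_cons2 p_path; rewrite {p}p_eq in p_path *.
have /and5P[_ _ _ /allP all_xS] := p_path.
rewrite (negbTE xj) => /andP[xNp _].
have /setU1P[yx|yS] := all_xS y (mem_behead (s := [:: x, y & q]) (mem_head y q)).
  by rewrite yx mem_head in xNp.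
exists y => //; rewrite max_jump_cons ge_max le_max lexx /=.
have [<-|yj] := eqVneq y j; first by rewrite MMJxx le_max d_ge0.
by rewrite le_max (MMJ_le_max_jump (is_path_from_setU1 xNS jS yj p_path)) orbT.
Qed.

End MinMaxJump.

Lemma Omega_uptoS (T : finType) (N : nat) (Om : 'I_N -> T) (k : nat)
    (hk : (k < N)%N) :
  Omega_upto Om k.+1 = Om (Ordinal hk) |: Omega_upto Om k.
Proof.
apply/setP => z; rewrite in_setU1; apply/imsetP/orP.
  case=> t; rewrite inE ltnS leq_eqVlt => /orP[/eqP tk|tk] ->; last first.
    by right; apply/imsetP; exists t; rewrite ?inE.
  by left; apply/eqP; congr Om; apply: val_inj.
case=> [/eqP->|/imsetP[t]]; first by exists (Ordinal hk); rewrite ?inE /=.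
by rewrite inE => tk ->; exists t; rewrite // inE ltnW.
Qed.

Lemma mem_Omega_upto (T : finType) (N : nat) (Om : 'I_N -> T) (k : nat)
    (t : 'I_N) :
  injective Om -> (Om t \in Omega_upto Om k) = (t < k)%N.
Proof. by move=> Om_inj; rewrite mem_imset ?inE. Qed.

Theorem theorem3p3 (R : realType) (T : finType) (d : T -> T -> R)
  (d_ge0 : forall x y, 0 <= d x y) (d_sym : forall x y, d x y = d y x)
  (d_xx : forall x, d x x = 0)
  (N : nat) (Om : 'I_N -> T) (Om_inj : injective Om)
  (n : nat) (hn1 : (1 <= n)%N) (hnN : (n < N)%N)
  (r : 'I_N) (hr : (r < n)%N) :
  let f := fun t : 'I_N =>
    Num.max (d (Om (Ordinal hnN)) (Om t)) (MMJ d (Omega_upto Om n) (Om t) (Om r)) in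
  let m := MMJ d (Omega_upto Om n.+1) (Om (Ordinal hnN)) (Om r) in
  (exists2 t : 'I_N, (t < n)%N & m = f t) /\
  (forall t : 'I_N, (t < n)%N -> m <= f t).
Proof.
move=> f m; rewrite {}/m Omega_uptoS.
set x := Om (Ordinal hnN); set S := Omega_upto Om n.
have xNS : x \notin S by rewrite mem_Omega_upto //= ltnn.
have rS : Om r \in S by rewrite mem_Omega_upto.
have m_le_f (t : 'I_N) : (t < n)%N -> MMJ d (x |: S) x (Om r) <= f t.
  by move=> tn; apply: (MMJ_setU1_le d_ge0 xNS); rewrite /S mem_Omega_upto.
split=> //; have [i /imsetP[t]] := MMJ_setU1_ge d_ge0 xNS rS.
rewrite inE => tn -> f_le_m; exists t => //.
by apply/eqP; rewrite eq_le m_le_f.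
Qed.
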